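(* (i) Let $x\in[0,1]$ admit an infinite OOCF expansion $((a_n,\varepsilon_n))_{n\ge1}$ that is eventually periodic. Then $x$ is either an $\infty$-rational or a quadratic irrational. (ii) If $x\in(0,1)$ is a quadratic irrational, then its OOCF expansion is eventually periodic.
   Context: Rationals are written $p/q$ with $p\in\mathbb Z$, $q\in\mathbb N$, $\gcd(p,q)=1$; $p/q$ is an $\infty$-rational if $p$ and $q$ have different parity (e.g. $0=0/1$). A quadratic irrational is an irrational real root of a quadratic polynomial with integer coefficients. Admissible digits: $D=\{(1,1)\}\cup\{(a,\varepsilon): a\in\mathbb Z,\ a\ge2,\ \varepsilon\in\{-1,1\}\}$. For integers $k\ge1$ put $B(k+1,-1)=\left[\frac{k-1}{k},\frac{2k-1}{2k+1}\right]$ and $B(k,1)=\left[\frac{2k-1}{2k+1},\frac{k}{k+1}\right]$. The OOCF map $T:[0,1]\to[0,1]$ is $T(x)=\frac{kx-(k-1)}{k-(k+1)x}$ for $x\in B(k+1,-1)$, $T(x)=\frac{k-(k+1)x}{kx-(k-1)}$ for $x\in B(k,1)$ ($k\ge1$; the formulas agree at common endpoints), and $T(1)=1$. An infinite OOCF expansion of $x\in[0,1]$ is a sequence $((a_n,\varepsilon_n))_{n\ge1}$ in $D$ with $T^{n-1}(x)\in B(a_n,\varepsilon_n)$ and $T^{n-1}(x)\neq1$ for all $n\ge1$; an irrational $x\in(0,1)$ has exactly one, called its OOCF expansion. *)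

From Stdlib Require Import Reals Lra ZArith.
Open Scope R_scope.

Definition admissible (d : Z * Z) : Prop :=
  let (a, e) := d in
  (a = 1%Z /\ e = 1%Z) \/ ((2 <= a)%Z /\ (e = (-1)%Z \/ e = 1%Z)).

Definition inB (d : Z * Z) (y : R) : Prop :=
  let (a, e) := d in
  (e = (-1)%Z /\ (2 <= a)%Z /\
     let k := IZR (a - 1) in (k - 1) / k <= y <= (2 * k - 1) / (2 * k + 1))
  \/
  (e = 1%Z /\ (1 <= a)%Z /\
     let k := IZR a in (2 * k - 1) / (2 * k + 1) <= y <= k / (k + 1)).

(* For x in [0,1), the unique k >= 1 with
   x ∈ [(k-1)/k, k/(k+1)) = B(k+1,-1) ∪ B(k,1) is k = floor(1/(1-x));
   at the common endpoint (2k-1)/(2k+1) both formulas agree (value 1).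
   Values outside [0,1] are irrelevant. *)
Definition oocf_T (x : R) : R :=
  if Req_EM_T x 1 then 1 else
  let k := IZR (Int_part (/ (1 - x))) in
  if Rle_dec x ((2 * k - 1) / (2 * k + 1))
  then (k * x - (k - 1)) / (k - (k + 1) * x)
  else (k - (k + 1) * x) / (k * x - (k - 1)).

(* s is an infinite OOCF expansion of x (indexed from 0: s n = (a_{n+1}, ε_{n+1})). *)
Definition is_oocf_expansion (x : R) (s : nat -> Z * Z) : Prop :=
  forall n : nat,
    admissible (s n) /\ inB (s n) (Nat.iter n oocf_T x) /\ Nat.iter n oocf_T x <> 1.

Definition eventually_periodic {A : Type} (s : nat -> A) : Prop :=
  exists N p : nat, (0 < p)%nat /\ forall n : nat, (N <= n)%nat -> s (n + p)%nat = s n.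

Definition inf_rational (x : R) : Prop :=
  exists p q : Z, (0 < q)%Z /\ Z.gcd p q = 1%Z /\ Z.odd p <> Z.odd q /\ x = IZR p / IZR q.

Definition irrational (x : R) : Prop :=
  forall p q : Z, q <> 0%Z -> x <> IZR p / IZR q.

Definition quadratic_irrational (x : R) : Prop :=
  irrational x /\
  exists a b c : Z, a <> 0%Z /\ IZR a * x ^ 2 + IZR b * x + IZR c = 0.

From Stdlib Require Import Reals ZArith Lra Lia Psatz List FinFun Classical ClassicalEpsilon.
Open Scope R_scope.

(* Each digit d gives an integer matrix G_d with nonnegative entries and determinant
   +-1 whose Möbius map inverts T on the cylinder B(d), so x = G_{d_1} ... G_{d_n} (T^n x).
   The bottom row of such a product of n matrices sums to at least 2n + 1, so the
   cylinders of rank n have length at most 1/(2n+1); both its column sums are odd.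

   (i) If the digits are periodic from N on with period p, contraction gives
   T^N x = T^(N+p) x, a fixed point of an integer Möbius map; so T^N x, and with it x,
   is a root of a nonzero integer quadratic form.  A rational x = p/q with p and q odd
   has no infinite expansion, by a parity argument on the product of |q| digit matrices.

   (ii) Pulling the quadratic form of x back along the products keeps its discriminant,
   and at the infinitely many n with T^n x >= 1/3 bounds its outer coefficients.  So
   these T^n x are roots of finitely many forms; two of them coincide, and from then on
   the digits, being read off from T^n x, repeat. *)

Lemma Rle_div_l_iff (a b c : R) : 0 < c -> (a / c <= b <-> a <= b * c).
Proof.
  intros Hc; split; intro H.
  - replace a with (a / c * c) by (field; lra). apply Rmult_le_compat_r; lra.
  - apply Rmult_le_reg_r with c; auto. replace (a / c * c) with a by (field; lra). lra.
Qed.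

Lemma Rle_div_r_iff (a b c : R) : 0 < c -> (b <= a / c <-> b * c <= a).
Proof.
  intros Hc; split; intro H.
  - replace a with (a / c * c) by (field; lra). apply Rmult_le_compat_r; lra.
  - apply Rmult_le_reg_r with c; auto. replace (a / c * c) with a by (field; lra). lra.
Qed.

Lemma Rlt_div_l_iff (a b c : R) : 0 < c -> (a / c < b <-> a < b * c).
Proof.
  intros Hc; split; intro H.
  - replace a with (a / c * c) by (field; lra). apply Rmult_lt_compat_r; lra.
  - apply Rmult_lt_reg_r with c; auto. replace (a / c * c) with a by (field; lra). lra.
Qed.

Lemma Rlt_div_r_iff (a b c : R) : 0 < c -> (b < a / c <-> b * c < a).
Proof.
  intros Hc; split; intro H.
  - replace a with (a / c * c) by (field; lra). apply Rmult_lt_compat_r; lra.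
  - apply Rmult_lt_reg_r with c; auto. replace (a / c * c) with a by (field; lra). lra.
Qed.

Lemma rational_neq_irrational (y : R) (p q : Z) : irrational y -> q <> 0%Z -> y <> IZR p / IZR q.
Proof. intros Hy Hq; apply Hy; exact Hq. Qed.

Lemma irrational_neq_0_1 (y : R) : irrational y -> y <> 0 /\ y <> 1.
Proof.
  intros Hy. split.
  - replace 0 with (IZR 0 / IZR 1) by (simpl; field). apply rational_neq_irrational; [exact Hy | lia].
  - replace 1 with (IZR 1 / IZR 1) by (simpl; field). apply rational_neq_irrational; [exact Hy | lia].
Qed.

Lemma eq0_of_Rabs_le_inv_odd (e : R) :
  (forall n : nat, Rabs e <= 1 / (2 * INR n + 1)) -> e = 0.
Proof.
  intros H. destruct (Req_dec e 0) as [|Hne]; auto. exfalso.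
  assert (He : 0 < Rabs e) by (apply Rabs_pos_lt; auto).
  destruct (archimed (1 / Rabs e)) as [Hu _].
  assert (Hpos : 0 < 1 / Rabs e) by (apply Rlt_div_r_iff; lra).
  assert (Hz : (0 < up (1 / Rabs e))%Z) by (apply lt_IZR; lra).
  specialize (H (Z.to_nat (up (1 / Rabs e)))).
  rewrite INR_IZR_INZ, Z2Nat.id in H by lia.
  apply Rle_div_r_iff in H; [|lra]. apply Rlt_div_l_iff in Hu; [|lra]. nra.
Qed.

Lemma Zabs_le_up (z : Z) (r : R) : Rabs (IZR z) <= r -> (Z.abs z <= up r)%Z.
Proof.
  intros H. rewrite <- abs_IZR in H. destruct (archimed r) as [Hr _].
  assert (Hlt : IZR (Z.abs z) < IZR (up r)) by lra. apply lt_IZR in Hlt. lia.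
Qed.

Definition int_range (K : Z) : list Z :=
  map (fun i => (Z.of_nat i - K)%Z) (seq 0 (Z.to_nat (2 * K + 1))).

Lemma in_int_range (K z : Z) : (Z.abs z <= K)%Z -> In z (int_range K).
Proof.
  intros H. unfold int_range. apply in_map_iff. exists (Z.to_nat (z + K)). split.
  - rewrite Z2Nat.id by lia. ring.
  - apply in_seq. lia.
Qed.

Lemma increasing_enumeration (P : nat -> Prop) :
  (forall N, exists n, (N <= n)%nat /\ P n) ->
  exists g : nat -> nat, (forall i, P (g i)) /\ (forall i j, (i < j)%nat -> (g i < g j)%nat).
Proof.
  intros HP.
  set (next := fun N => proj1_sig (constructive_indefinite_description _ (HP N))).
  assert (Hnext : forall N, (N <= next N)%nat /\ P (next N))
    by (intro N; exact (proj2_sig (constructive_indefinite_description _ (HP N)))).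
  set (g := fix g i := match i with O => next O | S i' => next (S (g i')) end).
  exists g. split.
  - intros [|i]; apply Hnext.
  - assert (Hstep : forall i, (g i < g (S i))%nat) by (intro i; apply (proj1 (Hnext (S (g i))))).
    intros i j Hij. induction Hij as [|j Hij IH]; [apply Hstep|].
    pose proof (Hstep j). lia.
Qed.

Lemma list_pigeonhole {X : Type} (l : list X) (f : nat -> X) :
  (forall i, In (f i) l) -> exists i j, (i < j)%nat /\ f i = f j.
Proof.
  intros Hin. apply NNPP. intro H.
  assert (Hinj : Injective f).
  { intros i j E. destruct (Nat.lt_trichotomy i j) as [L | [L | L]]; auto;
      exfalso; apply H; eauto. }
  assert (Hnd : NoDup (map f (seq 0 (S (length l)))))
    by (apply Injective_map_NoDup; [exact Hinj | apply seq_NoDup]).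
  assert (Hincl : incl (map f (seq 0 (S (length l)))) l).
  { intros y Hy. apply in_map_iff in Hy. destruct Hy as [i [<- _]]. apply Hin. }
  pose proof (NoDup_incl_length Hnd Hincl) as L. rewrite length_map, length_seq in L. lia.
Qed.

Lemma eventually_periodic_of_orbit_repeat {A B : Type} (f : A -> A) (phi : A -> B) (a : A)
  (n m : nat) :
  (n < m)%nat -> Nat.iter n f a = Nat.iter m f a ->
  eventually_periodic (fun k => phi (Nat.iter k f a)).
Proof.
  intros Hnm Hrep. exists n, (m - n)%nat. split; [lia|].
  intros k Hk. apply f_equal.
  replace (k + (m - n))%nat with (k - n + m)%nat by lia.
  assert (Ek : Nat.iter k f a = Nat.iter (k - n + n) f a) by (f_equal; lia).
  rewrite Ek, !Nat.iter_add, Hrep. reflexivity.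
Qed.

(** * The map T on a cylinder *)

Section Cylinder.

Variable k : Z.
Hypothesis k_ge1 : (1 <= k)%Z.
Local Notation K := (IZR k).

Let K_ge1 : 1 <= K.
Proof. apply IZR_le; exact k_ge1. Qed.

Lemma Int_part_inv_one_minus (y : R) :
  (K - 1) / K <= y < K / (K + 1) -> Int_part (/ (1 - y)) = k.
Proof.
  intros [H1 H2].
  apply Rle_div_l_iff in H1; [|lra]. apply Rlt_div_r_iff in H2; [|lra].
  symmetry; apply Int_part_spec.
  assert (Hy : y < 1) by nra.
  replace (/ (1 - y)) with (1 / (1 - y)) by (field; lra).
  split.
  - assert (1 / (1 - y) < K + 1) by (apply Rlt_div_l_iff; nra). lra.
  - apply Rle_div_r_iff; nra.
Qed.

Lemma oocf_T_left (y : R) :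
  (K - 1) / K <= y <= (2 * K - 1) / (2 * K + 1) ->
  oocf_T y = (K * y - (K - 1)) / (K - (K + 1) * y).
Proof.
  intros [H1 H2].
  assert (Hmid : y < K / (K + 1)).
  { apply Rle_div_r_iff in H2; [|lra]. apply Rlt_div_r_iff; nra. }
  assert (Hy : y <> 1) by (apply Rlt_div_r_iff in Hmid; [intro; subst; lra | lra]).
  unfold oocf_T. destruct (Req_EM_T y 1) as [E|_]; [contradiction|]. cbv zeta.
  rewrite (Int_part_inv_one_minus y (conj H1 Hmid)).
  destruct (Rle_dec y _); [reflexivity|contradiction].
Qed.

Lemma oocf_T_right (y : R) :
  (2 * K - 1) / (2 * K + 1) <= y <= K / (K + 1) ->
  oocf_T y = (K - (K + 1) * y) / (K * y - (K - 1)).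
Proof.
  intros [H1 H2].
  assert (Hlow : (K - 1) / K <= y).
  { apply Rle_div_l_iff in H1; [|lra]. apply Rle_div_l_iff; nra. }
  destruct (Rle_lt_or_eq_dec _ _ H2) as [Hlt | Hend].
  - assert (Hy : y <> 1) by (apply Rlt_div_r_iff in Hlt; [intro; subst; lra | lra]).
    unfold oocf_T. destruct (Req_EM_T y 1) as [E|_]; [contradiction|]. cbv zeta.
    rewrite (Int_part_inv_one_minus y (conj Hlow Hlt)).
    destruct (Rle_dec y _) as [Hle|]; [|reflexivity].
    assert (Ey : y = (2 * K - 1) / (2 * K + 1)) by lra.
    assert (0 < 2 * K + 1) by lra.
    rewrite Ey. field. split; [|lra]. nra.
  - (* at y = k/(k+1) the map uses the digit k+1 and both formulas vanish *)
    assert (Hinv : / (1 - y) = IZR (k + 1)) by (rewrite Hend, plus_IZR; field; lra).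
    assert (Hnum : K - (K + 1) * y = 0) by (rewrite Hend; field; lra).
    assert (Hy : y <> 1) by (intro E; rewrite E in Hnum; lra).
    unfold oocf_T. destruct (Req_EM_T y 1) as [E|_]; [contradiction|]. cbv zeta.
    rewrite Hinv.
    replace (Int_part (IZR (k + 1))) with (k + 1)%Z by (apply Int_part_spec; lra).
    rewrite plus_IZR, Hnum.
    assert (Hnum' : (K + 1) * y - (K + 1 - 1) = 0) by lra.
    destruct (Rle_dec _ _); rewrite Hnum'; unfold Rdiv;
      rewrite ?Rinv_0; ring.
Qed.

End Cylinder.

Lemma left_branch_inverse (K y t : R) :
  1 <= K -> (K - 1) / K <= y <= (2 * K - 1) / (2 * K + 1) ->
  t = (K * y - (K - 1)) / (K - (K + 1) * y) ->
  0 <= t <= 1 /\ y = (K * t + (K - 1)) / ((K + 1) * t + K).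
Proof.
  intros HK [H1 H2] Ht.
  apply Rle_div_l_iff in H1; [|lra]. apply Rle_div_r_iff in H2; [|lra].
  assert (Hd : 0 < K - (K + 1) * y) by nra.
  split.
  - rewrite Ht; split; [apply Rle_div_r_iff | apply Rle_div_l_iff]; nra.
  - assert (E : (K + 1) * t + K = 1 / (K - (K + 1) * y)) by (rewrite Ht; field; lra).
    rewrite E, Ht. field. lra.
Qed.

Lemma right_branch_inverse (K y t : R) :
  1 <= K -> (2 * K - 1) / (2 * K + 1) <= y <= K / (K + 1) ->
  t = (K - (K + 1) * y) / (K * y - (K - 1)) ->
  0 <= t <= 1 /\ y = ((K - 1) * t + K) / (K * t + (K + 1)).
Proof.
  intros HK [H1 H2] Ht.
  apply Rle_div_l_iff in H1; [|lra]. apply Rle_div_r_iff in H2; [|lra].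
  assert (Hd : 0 < K * y - (K - 1)) by nra.
  split.
  - rewrite Ht; split; [apply Rle_div_r_iff | apply Rle_div_l_iff]; nra.
  - assert (E : K * t + (K + 1) = 1 / (K * y - (K - 1))) by (rewrite Ht; field; lra).
    rewrite E, Ht. field. lra.
Qed.

Lemma inB_range (d : Z * Z) (y : R) : inB d y -> 0 <= y < 1.
Proof.
  destruct d as [a e]; unfold inB; cbv zeta.
  intros [[_ [Ha [H1 H2]]] | [_ [Ha [H1 H2]]]].
  - assert (HK : 1 <= IZR (a - 1)) by (apply IZR_le; lia).
    apply Rle_div_l_iff in H1; [|lra]. apply Rle_div_r_iff in H2; [|lra]. split; nra.
  - assert (HK : 1 <= IZR a) by (apply IZR_le; lia).
    apply Rle_div_l_iff in H1; [|lra]. apply Rle_div_r_iff in H2; [|lra]. split; nra.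
Qed.

Definition oocf_digit (y : R) : Z * Z :=
  let k := Int_part (/ (1 - y)) in
  if Rle_dec y ((2 * IZR k - 1) / (2 * IZR k + 1)) then ((k + 1)%Z, (-1)%Z) else (k, 1%Z).

Lemma oocf_digit_spec (y : R) :
  0 < y < 1 -> admissible (oocf_digit y) /\ inB (oocf_digit y) y.
Proof.
  intros Hy. unfold oocf_digit; cbv zeta.
  set (k := Int_part (/ (1 - y))).
  destruct (base_Int_part (/ (1 - y))) as [Hk1 Hk2]; fold k in Hk1, Hk2.
  replace (/ (1 - y)) with (1 / (1 - y)) in Hk1, Hk2 by (field; lra).
  assert (Hinv : 1 < 1 / (1 - y)) by (apply Rlt_div_r_iff; lra).
  assert (Hk : (1 <= k)%Z) by (assert (Hk0 : 0 < IZR k) by lra; apply lt_IZR in Hk0; lia).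
  assert (HK : 1 <= IZR k) by (apply IZR_le; exact Hk).
  apply Rle_div_r_iff in Hk1; [|lra].
  assert (Hk3 : 1 / (1 - y) < IZR k + 1) by lra.
  apply Rlt_div_l_iff in Hk3; [|lra].
  destruct (Rle_dec y _) as [Hl | Hn].
  - split; [right; lia|].
    left. split; [reflexivity|]. split; [lia|].
    replace (k + 1 - 1)%Z with k by ring.
    split; [apply Rle_div_l_iff; nra | exact Hl].
  - split; [destruct (Z.eq_dec k 1); [left | right]; lia|].
    right. split; [reflexivity|]. split; [exact Hk|].
    split; [lra | apply Rle_div_r_iff; nra].
Qed.

Lemma inB_irrational_digit (d : Z * Z) (y : R) :
  inB d y -> irrational y -> d = oocf_digit y.
Proof.
  destruct d as [a e]; unfold inB; cbv zeta.
  intros [[-> [Ha [H1 H2]]] | [-> [Ha [H1 H2]]]] Hirr; unfold oocf_digit; cbv zeta.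
  - assert (HK : 1 <= IZR (a - 1)) by (apply IZR_le; lia).
    assert (Hlt : y < IZR (a - 1) / (IZR (a - 1) + 1)).
    { apply Rle_div_r_iff in H2; [|lra]. apply Rlt_div_r_iff; nra. }
    rewrite (Int_part_inv_one_minus (a - 1) ltac:(lia) y (conj H1 Hlt)).
    destruct (Rle_dec y _); [|contradiction].
    f_equal; ring.
  - set (K := IZR a) in *.
    assert (HK : 1 <= K) by (apply IZR_le; lia).
    assert (N1 : y <> K / (K + 1)).
    { unfold K. rewrite <- plus_IZR. apply rational_neq_irrational; [exact Hirr | lia]. }
    assert (N2 : y <> (2 * K - 1) / (2 * K + 1)).
    { unfold K.
      replace (2 * IZR a - 1) with (IZR (2 * a - 1)) by (rewrite minus_IZR, mult_IZR; ring).
      replace (2 * IZR a + 1) with (IZR (2 * a + 1)) by (rewrite plus_IZR, mult_IZR; ring).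
      apply rational_neq_irrational; [exact Hirr | lia]. }
    assert (Hlow : (K - 1) / K <= y).
    { apply Rle_div_l_iff in H1; [|lra]. apply Rle_div_l_iff; nra. }
    assert (Hlt : y < K / (K + 1))
      by (destruct (Rle_lt_or_eq_dec _ _ H2); [assumption | contradiction]).
    rewrite (Int_part_inv_one_minus a ltac:(lia) y (conj Hlow Hlt)). fold K.
    destruct (Rle_dec y _) as [Hle | _]; [|reflexivity].
    exfalso; apply N2; lra.
Qed.

(** * Digit matrices and their Möbius maps *)

Record mat := Mat { m11 : Z; m12 : Z; m21 : Z; m22 : Z }.

Definition mat_mul (M N : mat) : mat :=
  Mat (m11 M * m11 N + m12 M * m21 N) (m11 M * m12 N + m12 M * m22 N)
      (m21 M * m11 N + m22 M * m21 N) (m21 M * m12 N + m22 M * m22 N).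

Definition mat_det (M : mat) : Z := (m11 M * m22 M - m12 M * m21 M)%Z.

Definition mat_id : mat := Mat 1 0 0 1.

Definition mat_adj (M : mat) : mat := Mat (m22 M) (- m12 M) (- m21 M) (m11 M).

Lemma mat_det_mul (M N : mat) : mat_det (mat_mul M N) = (mat_det M * mat_det N)%Z.
Proof. unfold mat_det, mat_mul; simpl; ring. Qed.

Lemma mat_det_adj (M : mat) : mat_det (mat_adj M) = mat_det M.
Proof. destruct M; unfold mat_det, mat_adj; cbn [m11 m12 m21 m22]; ring. Qed.

Definition mobius (M : mat) (t : R) : R :=
  (IZR (m11 M) * t + IZR (m12 M)) / (IZR (m21 M) * t + IZR (m22 M)).

Definition digit_mat (d : Z * Z) : mat :=
  let (a, e) := d in
  if Z.eqb e (-1) then Mat (a - 1) (a - 2) a (a - 1) else Mat (a - 1) a a (a + 1).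

Lemma inB_oocf_T (d : Z * Z) (y : R) :
  inB d y -> 0 <= oocf_T y <= 1 /\ y = mobius (digit_mat d) (oocf_T y).
Proof.
  destruct d as [a e]; unfold inB; cbv zeta.
  intros [[-> [Ha Hy]] | [-> [Ha Hy]]]; unfold mobius; simpl.
  - assert (HK : 1 <= IZR (a - 1)) by (apply IZR_le; lia).
    replace (IZR (a - 2)) with (IZR (a - 1) - 1) by (rewrite !minus_IZR; ring).
    replace (IZR a) with (IZR (a - 1) + 1) by (rewrite minus_IZR; ring).
    apply (left_branch_inverse _ _ _ HK Hy), oocf_T_left; [lia | exact Hy].
  - assert (HK : 1 <= IZR a) by (apply IZR_le; lia).
    rewrite minus_IZR, plus_IZR.
    apply (right_branch_inverse _ _ _ HK Hy), oocf_T_right; [lia | exact Hy].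
Qed.

Lemma oocf_T_below_third (d : Z * Z) (y : R) :
  inB d y -> y < 1 / 3 -> y = oocf_T y / (2 * oocf_T y + 1).
Proof.
  intros HB Hy. destruct (inB_oocf_T _ _ HB) as [HT Hyt].
  assert (Hd : d = (2%Z, (-1)%Z)).
  { destruct d as [a e]; unfold inB in HB; cbv zeta in HB.
    destruct HB as [[-> [Ha [H1 _]]] | [-> [Ha [H1 _]]]].
    - assert (HK : 1 <= IZR (a - 1)) by (apply IZR_le; lia).
      apply Rle_div_l_iff in H1; [|lra].
      destruct (Z.eq_dec a 2) as [-> | Ha2]; [reflexivity|].
      assert (2 <= IZR (a - 1)) by (apply IZR_le; lia). exfalso. nra.
    - assert (HK : 1 <= IZR a) by (apply IZR_le; lia).
      apply Rle_div_l_iff in H1; [|lra]. exfalso. nra. }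
  subst d. rewrite Hyt at 1. unfold mobius; simpl. f_equal; ring.
Qed.

(* Invariants of products of n digit matrices: the bottom row bounds the length of the
   cylinder [mobius M [0,1]], the odd columns drive the parity argument for rationals. *)
Record oocf_mat (n : nat) (M : mat) : Prop := {
  oocf_m11 : (0 <= m11 M)%Z;
  oocf_m12 : (0 <= m12 M)%Z;
  oocf_m21 : (0 <= m21 M)%Z;
  oocf_m22 : (1 <= m22 M)%Z;
  oocf_bottom : (2 * Z.of_nat n + 1 <= m21 M + m22 M)%Z;
  oocf_det : mat_det M = 1%Z \/ mat_det M = (-1)%Z;
  oocf_col1 : Z.odd (m11 M + m21 M) = true;
  oocf_col2 : Z.odd (m12 M + m22 M) = true }.

Lemma oocf_mat_id : oocf_mat 0 mat_id.
Proof. split; simpl; auto; unfold mat_det; simpl; lia. Qed.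

Lemma digit_mat_oocf (d : Z * Z) :
  admissible d -> oocf_mat 1 (digit_mat d) /\ (1 <= m11 (digit_mat d) + m12 (digit_mat d))%Z.
Proof.
  destruct d as [a e]; unfold admissible.
  intros [[-> ->] | [Ha [-> | ->]]]; simpl.
  - repeat split; simpl; unfold mat_det; simpl; lia.
  - split; [|lia].
    split; simpl; unfold mat_det; simpl; try lia.
    + replace (a - 1 + a)%Z with (2 * (a - 1) + 1)%Z by ring. apply Z.odd_odd.
    + replace (a - 2 + (a - 1))%Z with (2 * (a - 2) + 1)%Z by ring. apply Z.odd_odd.
  - split; [|lia].
    split; simpl; unfold mat_det; simpl; try lia.
    + replace (a - 1 + a)%Z with (2 * (a - 1) + 1)%Z by ring. apply Z.odd_odd.
    + replace (a + (a + 1))%Z with (2 * a + 1)%Z by ring. apply Z.odd_odd.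
Qed.

Lemma oocf_mat_mul (n : nat) (M G : mat) :
  oocf_mat n M -> oocf_mat 1 G -> (1 <= m11 G + m12 G)%Z -> oocf_mat (S n) (mat_mul M G).
Proof.
  destruct M as [a b c d], G as [a' b' c' d'].
  intros [Ha Hb Hc Hd Hs Hdet Ho1 Ho2] [Ha' Hb' Hc' Hd' Hs' Hdet' Ho1' Ho2'] Hab';
    cbn [m11 m12 m21 m22] in *.
  split; try (cbn [m11 m12 m21 m22 mat_mul]; nia).
  - rewrite mat_det_mul. destruct Hdet as [-> | ->], Hdet' as [-> | ->]; simpl; auto.
  - cbn [m11 m12 m21 m22 mat_mul].
    replace (a * a' + b * c' + (c * a' + d * c'))%Z with (a' * (a + c) + c' * (b + d))%Z by ring.
    rewrite Z.odd_add, !Z.odd_mul, Ho1, Ho2, !Bool.andb_true_r, <- Z.odd_add. exact Ho1'.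
  - cbn [m11 m12 m21 m22 mat_mul].
    replace (a * b' + b * d' + (c * b' + d * d'))%Z with (b' * (a + c) + d' * (b + d))%Z by ring.
    rewrite Z.odd_add, !Z.odd_mul, Ho1, Ho2, !Bool.andb_true_r, <- Z.odd_add. exact Ho2'.
Qed.

Fixpoint digit_prod (s : nat -> Z * Z) (n m : nat) : mat :=
  match m with
  | O => mat_id
  | S m' => mat_mul (digit_prod s n m') (digit_mat (s (n + m')%nat))
  end.

Lemma digit_prod_oocf (s : nat -> Z * Z) (n m : nat) :
  (forall i, admissible (s i)) -> oocf_mat m (digit_prod s n m).
Proof.
  intros Hs. induction m as [|m IH]; simpl.
  - exact oocf_mat_id.
  - destruct (digit_mat_oocf _ (Hs (n + m)%nat)). apply oocf_mat_mul; auto.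
Qed.

Lemma digit_prod_shift_periodic (s : nat -> Z * Z) (N p m : nat) :
  (forall i, (N <= i)%nat -> s (i + p)%nat = s i) ->
  digit_prod s (N + p) m = digit_prod s N m.
Proof.
  intros Hp. induction m as [|m IH]; simpl; auto.
  rewrite IH. replace (N + p + m)%nat with (N + m + p)%nat by lia.
  rewrite Hp by lia. reflexivity.
Qed.

Lemma oocf_mat_den_pos (n : nat) (M : mat) (t : R) :
  oocf_mat n M -> 0 <= t -> 0 < IZR (m21 M) * t + IZR (m22 M).
Proof.
  intros [_ _ Hc Hd _ _ _ _] Ht. apply IZR_le in Hc, Hd.
  assert (0 <= IZR (m21 M) * t) by (apply Rmult_le_pos; lra). lra.
Qed.

Lemma mobius_nonneg (n : nat) (M : mat) (t : R) :
  oocf_mat n M -> 0 <= t -> 0 <= mobius M t.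
Proof.
  intros HM Ht. pose proof (oocf_mat_den_pos _ _ _ HM Ht) as Hw.
  destruct HM as [Ha Hb _ _ _ _ _ _]. apply IZR_le in Ha, Hb.
  apply Rle_div_r_iff; [exact Hw|]. rewrite Rmult_0_l.
  assert (0 <= IZR (m11 M) * t) by (apply Rmult_le_pos; lra). lra.
Qed.

Lemma mobius_mul (n m : nat) (M N : mat) (t : R) :
  oocf_mat n M -> oocf_mat m N -> 0 <= t ->
  mobius (mat_mul M N) t = mobius M (mobius N t).
Proof.
  intros HM HN Ht.
  pose proof (oocf_mat_den_pos _ _ _ HN Ht) as HwN.
  pose proof (oocf_mat_den_pos _ _ _ HM (mobius_nonneg _ _ _ HN Ht)) as HwM.
  unfold mobius in *. destruct M as [a b c d], N as [a' b' c' d'].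
  unfold mat_mul; cbn [m11 m12 m21 m22] in *.
  set (u := (IZR a' * t + IZR b') / (IZR c' * t + IZR d')) in *.
  rewrite !plus_IZR, !mult_IZR.
  replace ((IZR c * IZR a' + IZR d * IZR c') * t + (IZR c * IZR b' + IZR d * IZR d'))
    with ((IZR c * u + IZR d) * (IZR c' * t + IZR d')) by (unfold u; field; lra).
  replace ((IZR a * IZR a' + IZR b * IZR c') * t + (IZR a * IZR b' + IZR b * IZR d'))
    with ((IZR a * u + IZR b) * (IZR c' * t + IZR d')) by (unfold u; field; lra).
  field. lra.
Qed.

Lemma den_product_spread (c d u v : R) :
  0 <= c -> 1 <= d -> 0 <= u <= 1 -> 0 <= v <= 1 ->
  (u - v) * (c + d) <= (c * u + d) * (c * v + d).
Proof.
  intros Hc Hd Hu Hv.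
  assert (0 <= (c * u + d) * (c * v + d - 1)) by (apply Rmult_le_pos; nra).
  assert (0 <= d * (1 - u)) by (apply Rmult_le_pos; lra).
  assert (0 <= c * v) by (apply Rmult_le_pos; lra).
  assert (0 <= d * v) by (apply Rmult_le_pos; lra).
  nra.
Qed.

Lemma mobius_dist (n : nat) (M : mat) (t w : R) :
  oocf_mat n M -> 0 <= t <= 1 -> 0 <= w <= 1 ->
  Rabs (mobius M t - mobius M w) <= 1 / (2 * INR n + 1).
Proof.
  destruct M as [a b c d]. intros [_ _ Hc Hd Hs Hdet _ _] Ht Hw.
  unfold mat_det, mobius in *; cbn [m11 m12 m21 m22] in *.
  assert (Hn : 2 * INR n + 1 <= IZR c + IZR d).
  { rewrite INR_IZR_INZ, <- plus_IZR.
    replace (2 * IZR (Z.of_nat n) + 1) with (IZR (2 * Z.of_nat n + 1))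
      by (rewrite plus_IZR, mult_IZR; ring).
    apply IZR_le, Hs. }
  apply IZR_le in Hc, Hd.
  assert (0 <= INR n) by apply pos_INR.
  assert (0 <= IZR c * t) by (apply Rmult_le_pos; lra).
  assert (0 <= IZR c * w) by (apply Rmult_le_pos; lra).
  pose proof (den_product_spread (IZR c) (IZR d)) as Hspread.
  set (P := (IZR c * t + IZR d) * (IZR c * w + IZR d)).
  assert (HP : 0 < P) by (unfold P; apply Rmult_lt_0_compat; lra).
  assert (HtwP : Rabs (t - w) * (IZR c + IZR d) <= P).
  { unfold Rabs; destruct (Rcase_abs (t - w)).
    - unfold P. rewrite (Rmult_comm (IZR c * t + IZR d)).
      replace (- (t - w)) with (w - t) by ring. apply Hspread; auto.
    - apply Hspread; auto. }
  replace ((IZR a * t + IZR b) / (IZR c * t + IZR d) - (IZR a * w + IZR b) / (IZR c * w + IZR d))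
    with (IZR (a * d - b * c) * ((t - w) / P))
    by (unfold P; rewrite minus_IZR, !mult_IZR; field; split; lra).
  rewrite Rabs_mult.
  replace (Rabs (IZR (a * d - b * c))) with 1
    by (destruct Hdet as [-> | ->]; unfold Rabs; destruct Rcase_abs; lra).
  rewrite Rmult_1_l. unfold Rdiv. rewrite Rabs_mult, Rabs_inv, (Rabs_right P) by lra.
  apply Rle_trans with (1 / (IZR c + IZR d)).
  - apply Rle_div_r_iff; [lra|].
    replace (Rabs (t - w) * / P * (IZR c + IZR d)) with (Rabs (t - w) * (IZR c + IZR d) / P)
      by (field; lra).
    apply Rle_div_l_iff; lra.
  - unfold Rdiv. rewrite !Rmult_1_l. apply Rinv_le_contravar; lra.
Qed.

Lemma mobius_irrational (M : mat) (t : R) :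
  IZR (m21 M) * t + IZR (m22 M) <> 0 -> irrational (mobius M t) -> irrational t.
Proof.
  destruct M as [a b c d]; unfold mobius; cbn [m11 m12 m21 m22].
  intros Hw Hi p q Hq Ht.
  assert (Hq' : IZR q <> 0) by (apply not_0_IZR; exact Hq).
  assert (Ew : IZR c * t + IZR d = IZR (c * p + d * q) / IZR q)
    by (rewrite Ht, plus_IZR, !mult_IZR; field; exact Hq').
  assert (Hden : (c * p + d * q <> 0)%Z).
  { intro E. apply Hw. rewrite Ew, E. unfold Rdiv. ring. }
  apply (Hi (a * p + b * q)%Z (c * p + d * q)%Z Hden).
  assert (Hden' : IZR (c * p + d * q) <> 0) by (apply not_0_IZR; exact Hden).
  rewrite Ew, Ht.
  replace (IZR (a * p + b * q)) with (IZR a * IZR p + IZR b * IZR q)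
    by (rewrite plus_IZR, !mult_IZR; ring).
  field. split; assumption.
Qed.

Lemma mobius_column_deviation (M : mat) (t : R) :
  IZR (m21 M) * t + IZR (m22 M) <> 0 ->
  IZR (m11 M) - IZR (m21 M) * mobius M t
    = IZR (mat_det M) / (IZR (m21 M) * t + IZR (m22 M)) /\
  IZR (m12 M) - IZR (m22 M) * mobius M t
    = - IZR (mat_det M) * t / (IZR (m21 M) * t + IZR (m22 M)).
Proof.
  intros Hw. unfold mobius, mat_det. rewrite minus_IZR, !mult_IZR.
  split; field; exact Hw.
Qed.

(** * Orbits *)

Local Notation orbit x n := (Nat.iter n oocf_T x).

Lemma expansion_orbit_range (x : R) (s : nat -> Z * Z) (n : nat) :
  is_oocf_expansion x s -> 0 <= orbit x n < 1.
Proof. intros Hx. exact (inB_range _ _ (proj1 (proj2 (Hx n)))). Qed.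

Lemma expansion_admissible (x : R) (s : nat -> Z * Z) :
  is_oocf_expansion x s -> forall i, admissible (s i).
Proof. intros Hx i. exact (proj1 (Hx i)). Qed.

Lemma orbit_mobius (x : R) (s : nat -> Z * Z) (n m : nat) :
  is_oocf_expansion x s -> orbit x n = mobius (digit_prod s n m) (orbit x (n + m)).
Proof.
  intros Hx. induction m as [|m IH]; simpl digit_prod.
  - rewrite Nat.add_0_r. unfold mobius, mat_id; cbn [m11 m12 m21 m22]. field.
  - replace (n + S m)%nat with (S (n + m)) by lia. simpl Nat.iter.
    destruct (Hx (n + m)%nat) as [Had [HB _]].
    destruct (inB_oocf_T _ _ HB) as [HT Hy].
    rewrite (mobius_mul m 1); [| apply digit_prod_oocf, (expansion_admissible x s Hx)
                                | apply digit_mat_oocf, Had | lra].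
    rewrite <- Hy. exact IH.
Qed.

Lemma orbit_repeat_of_periodic (x : R) (s : nat -> Z * Z) (N p : nat) :
  is_oocf_expansion x s -> (forall i, (N <= i)%nat -> s (i + p)%nat = s i) ->
  orbit x N = orbit x (N + p).
Proof.
  intros Hx Hper. apply Rminus_diag_uniq, eq0_of_Rabs_le_inv_odd. intro m.
  rewrite (orbit_mobius x s N m Hx), (orbit_mobius x s (N + p) m Hx),
    (digit_prod_shift_periodic s N p m Hper).
  pose proof (expansion_orbit_range x s (N + m) Hx).
  pose proof (expansion_orbit_range x s (N + p + m) Hx).
  apply mobius_dist; [apply digit_prod_oocf, (expansion_admissible x s Hx) | lra | lra].
Qed.

Lemma oocf_T_irrational (y : R) :
  0 < y < 1 -> irrational y -> 0 < oocf_T y < 1 /\ irrational (oocf_T y).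
Proof.
  intros Hy Hi.
  destruct (oocf_digit_spec y Hy) as [Had HB].
  destruct (inB_oocf_T _ _ HB) as [HT Hyt].
  assert (HiT : irrational (oocf_T y)).
  { apply (mobius_irrational (digit_mat (oocf_digit y))); [|rewrite <- Hyt; exact Hi].
    apply Rgt_not_eq, (oocf_mat_den_pos 1); [apply digit_mat_oocf, Had | lra]. }
  destruct (irrational_neq_0_1 _ HiT). split; [lra | exact HiT].
Qed.

Lemma oocf_expansion_exists (x : R) : 0 < x < 1 -> irrational x -> exists s, is_oocf_expansion x s.
Proof.
  intros Hx Hi. exists (fun n => oocf_digit (orbit x n)).
  assert (Horb : forall n, 0 < orbit x n < 1 /\ irrational (orbit x n)).
  { induction n as [|n [Hr Hirr]]; [split; assumption|]. apply oocf_T_irrational; assumption. }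
  intro n. destruct (Horb n) as [Hr _].
  destruct (oocf_digit_spec _ Hr) as [Had HB]. repeat split; auto. lra.
Qed.

Lemma orbit_irrational (x : R) (s : nat -> Z * Z) (n : nat) :
  irrational x -> is_oocf_expansion x s -> irrational (orbit x n).
Proof.
  intros Hi Hx. apply (mobius_irrational (digit_prod s 0 n)).
  - apply Rgt_not_eq, (oocf_mat_den_pos n);
      [apply digit_prod_oocf, (expansion_admissible x s Hx) | apply (expansion_orbit_range x s n Hx)].
  - pose proof (orbit_mobius x s 0 n Hx) as E. simpl Nat.iter in E. rewrite <- E. exact Hi.
Qed.

(* Below 1/3 the map is t |-> t / (1 - 2 t), lowering 1/t by 2; an irrational orbit
   cannot stay there forever. *)
Lemma orbit_ge_third_infinitely_often (x : R) (s : nat -> Z * Z) :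
  irrational x -> is_oocf_expansion x s -> forall N, exists n, (N <= n)%nat /\ 1 / 3 <= orbit x n.
Proof.
  intros Hi Hx N. apply NNPP. intro Hnot.
  assert (Hsmall : forall n, (N <= n)%nat -> orbit x n < 1 / 3).
  { intros n Hn. destruct (Rlt_le_dec (orbit x n) (1 / 3)) as [|Hge]; [assumption|].
    exfalso. apply Hnot. eauto. }
  assert (Hpos : forall n, 0 < orbit x n).
  { intro n. destruct (irrational_neq_0_1 _ (orbit_irrational x s n Hi Hx)).
    pose proof (expansion_orbit_range x s n Hx). lra. }
  assert (Hstep : forall n, (N <= n)%nat -> 1 / orbit x (S n) = 1 / orbit x n - 2).
  { intros n Hn. simpl Nat.iter.
    pose proof (Hpos (S n)) as HT; simpl Nat.iter in HT.
    rewrite (oocf_T_below_third (s n) (orbit x n)) at 2; [| apply (Hx n) | apply Hsmall, Hn].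
    field. lra. }
  assert (Hdrop : forall j, 1 / orbit x (N + j) = 1 / orbit x N - 2 * INR j).
  { induction j as [|j IH].
    - rewrite Nat.add_0_r. simpl. ring.
    - rewrite S_INR, Nat.add_succ_r, Hstep, IH by lia. ring. }
  set (u := 1 / orbit x N).
  destruct (archimed u) as [Hu _].
  assert (Hu0 : 0 < u) by (unfold u; apply Rlt_div_r_iff; [apply Hpos | lra]).
  assert (Hz : (0 < up u)%Z) by (apply lt_IZR; lra).
  specialize (Hdrop (Z.to_nat (up u))). fold u in Hdrop.
  rewrite INR_IZR_INZ, Z2Nat.id in Hdrop by lia.
  assert (0 < 1 / orbit x (N + Z.to_nat (up u))) by (apply Rlt_div_r_iff; [apply Hpos | lra]).
  lra.
Qed.

(** * Integer quadratic forms *)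

Record qform := QForm { qa : Z; qb : Z; qc : Z }.

Definition qzero : qform := QForm 0 0 0.

Definition qeval (q : qform) (x : R) : R := IZR (qa q) * x ^ 2 + IZR (qb q) * x + IZR (qc q).

Definition qdisc (q : qform) : Z := (qb q * qb q - 4 * qa q * qc q)%Z.

(* The binary form q(u, v) = qa u^2 + qb u v + qc v^2 composed with (u, v) |-> M (u, v). *)
Definition qpull (q : qform) (M : mat) : qform :=
  QForm (qa q * m11 M * m11 M + qb q * m11 M * m21 M + qc q * m21 M * m21 M)
        (2 * qa q * m11 M * m12 M + qb q * (m11 M * m22 M + m12 M * m21 M)
           + 2 * qc q * m21 M * m22 M)
        (qa q * m12 M * m12 M + qb q * m12 M * m22 M + qc q * m22 M * m22 M).

Lemma qeval_qpull (q : qform) (M : mat) (t : R) :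
  IZR (m21 M) * t + IZR (m22 M) <> 0 ->
  qeval (qpull q M) t = (IZR (m21 M) * t + IZR (m22 M)) ^ 2 * qeval q (mobius M t).
Proof.
  destruct q as [A B C], M as [a b c d]. unfold qeval, qpull, mobius; cbn [qa qb qc m11 m12 m21 m22].
  intros Hw. repeat rewrite ?plus_IZR, ?mult_IZR. field. exact Hw.
Qed.

Lemma qdisc_qpull (q : qform) (M : mat) :
  qdisc (qpull q M) = (mat_det M * mat_det M * qdisc q)%Z.
Proof. destruct q, M; unfold qdisc, qpull, mat_det; cbn [qa qb qc m11 m12 m21 m22]; ring. Qed.

Lemma qpull_eq_qzero (q : qform) (M : mat) :
  mat_det M <> 0%Z -> qpull q M = qzero -> q = qzero.
Proof.
  destruct q as [A B C], M as [a b c d]. unfold qpull, mat_det, qzero; cbn [qa qb qc m11 m12 m21 m22].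
  intros HD Hq.
  pose proof (f_equal qa Hq) as H2; pose proof (f_equal qb Hq) as H1;
    pose proof (f_equal qc Hq) as H0; cbn [qa qb qc] in H2, H1, H0.
  (* pulling back once more along the adjugate multiplies q by det^2 *)
  assert (EA : ((a*d - b*c) * (a*d - b*c) * A = (A*a*a + B*a*c + C*c*c) * d*d
     - (2*A*a*b + B*(a*d + b*c) + 2*C*c*d) * c*d + (A*b*b + B*b*d + C*d*d) * c*c)%Z) by ring.
  assert (EB : ((a*d - b*c) * (a*d - b*c) * B = - 2 * (A*a*a + B*a*c + C*c*c) * b*d
     + (2*A*a*b + B*(a*d + b*c) + 2*C*c*d) * (a*d + b*c) - 2 * (A*b*b + B*b*d + C*d*d) * a*c)%Z)
    by ring.
  assert (EC : ((a*d - b*c) * (a*d - b*c) * C = (A*a*a + B*a*c + C*c*c) * b*b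
     - (2*A*a*b + B*(a*d + b*c) + 2*C*c*d) * a*b + (A*b*b + B*b*d + C*d*d) * a*a)%Z) by ring.
  rewrite H2, H1, H0 in EA, EB, EC.
  assert (HD2 : ((a*d - b*c) * (a*d - b*c) <> 0)%Z) by (apply Z.neq_mul_0; auto).
  f_equal; nia.
Qed.

Lemma qeval_qpull_adj_mobius (q : qform) (M : mat) (z : R) :
  IZR (m21 M) * z + IZR (m22 M) <> 0 ->
  qeval (qpull q (mat_adj M)) (mobius M z)
    = (IZR (mat_det M) / (IZR (m21 M) * z + IZR (m22 M))) ^ 2 * qeval q z.
Proof.
  destruct q as [A B C], M as [a b c d].
  unfold qeval, qpull, mat_adj, mobius, mat_det; cbn [qa qb qc m11 m12 m21 m22].
  intros Hw. repeat rewrite ?plus_IZR, ?minus_IZR, ?mult_IZR, ?opp_IZR. field. exact Hw.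
Qed.

Lemma qa_neq0_of_irrational_root (q : qform) (x : R) :
  irrational x -> q <> qzero -> qeval q x = 0 -> qa q <> 0%Z.
Proof.
  destruct q as [A B C]; unfold qeval, qzero; cbn [qa qb qc].
  intros Hi Hnz Hq ->. simpl in Hq.
  destruct (Z.eq_dec B 0) as [-> | HB].
  - apply Hnz. f_equal. apply eq_IZR. simpl in Hq. lra.
  - apply (Hi (- C)%Z B HB). rewrite opp_IZR.
    assert (IZR B <> 0) by (apply not_0_IZR; exact HB).
    field_simplify_eq; [lra | assumption].
Qed.

Lemma quadratic_irrational_of_root (q : qform) (x : R) :
  irrational x -> q <> qzero -> qeval q x = 0 -> quadratic_irrational x.
Proof.
  intros Hi Hnz Hq. split; [exact Hi|].
  exists (qa q), (qb q), (qc q). split; [apply (qa_neq0_of_irrational_root q x); auto | exact Hq].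
Qed.

Definition qfix (P : mat) : qform := QForm (m21 P) (m22 P - m11 P) (- m12 P).

Lemma qeval_qfix (P : mat) (z : R) :
  IZR (m21 P) * z + IZR (m22 P) <> 0 -> mobius P z = z -> qeval (qfix P) z = 0.
Proof.
  intros Hw Hz. unfold qeval, qfix; cbn [qa qb qc].
  rewrite minus_IZR, opp_IZR.
  assert (Ez : z * (IZR (m21 P) * z + IZR (m22 P)) = IZR (m11 P) * z + IZR (m12 P)).
  { rewrite <- Hz at 1. unfold mobius. field. exact Hw. }
  lra.
Qed.

Lemma qfix_neq_qzero (n : nat) (P : mat) : oocf_mat n P -> (0 < n)%nat -> qfix P <> qzero.
Proof.
  intros [_ _ _ Hd Hs Hdet _ _] Hn Hq. unfold qfix, qzero, mat_det in *.
  injection Hq as Hc Hda Hb.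
  assert (Ha : m11 P = m22 P) by lia. assert (Hb0 : m12 P = 0%Z) by lia.
  rewrite Ha, Hb0, Hc in Hdet. rewrite Hc in Hs. nia.
Qed.

Definition qroots (q : qform) : list R :=
  let D := sqrt (IZR (qdisc q)) in
  (- IZR (qb q) + D) / (2 * IZR (qa q)) :: (- IZR (qb q) - D) / (2 * IZR (qa q)) :: nil.

Lemma qeval_root_in_qroots (q : qform) (x : R) :
  qa q <> 0%Z -> qeval q x = 0 -> In x (qroots q).
Proof.
  destruct q as [A B C]. unfold qeval, qroots, qdisc; cbn [qa qb qc].
  intros HA Hq. assert (HA' : IZR A <> 0) by (apply not_0_IZR; exact HA).
  assert (HD : IZR (B * B - 4 * A * C) = (2 * IZR A * x + IZR B) ^ 2).
  { rewrite minus_IZR, !mult_IZR. simpl. nra. }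
  rewrite HD. destruct (Rle_or_lt 0 (2 * IZR A * x + IZR B)) as [Hw | Hw].
  - left. rewrite sqrt_pow2 by exact Hw. field. exact HA'.
  - right. left.
    replace ((2 * IZR A * x + IZR B) ^ 2) with ((- (2 * IZR A * x + IZR B)) ^ 2) by ring.
    rewrite sqrt_pow2 by lra. field. exact HA'.
Qed.

Definition qhom (q : qform) (u v : R) : R :=
  IZR (qa q) * u ^ 2 + IZR (qb q) * u * v + IZR (qc q) * v ^ 2.

Lemma qpull_qa (q : qform) (M : mat) :
  IZR (qa (qpull q M)) = qhom q (IZR (m11 M)) (IZR (m21 M)).
Proof. unfold qhom, qpull; cbn [qa qb qc]. rewrite !plus_IZR, !mult_IZR. ring. Qed.

Lemma qpull_qc (q : qform) (M : mat) :
  IZR (qc (qpull q M)) = qhom q (IZR (m12 M)) (IZR (m22 M)).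
Proof. unfold qhom, qpull; cbn [qa qb qc]. rewrite !plus_IZR, !mult_IZR. ring. Qed.

(* x - x' = 2 x + qb/qa, where x' is the conjugate root of x *)
Definition qbound (q : qform) (x : R) : R :=
  Rabs (IZR (qa q)) * (1 + 3 * Rabs (2 * x + IZR (qb q) / IZR (qa q))).

(* q(u, v) = qa (u - v x) (u - v x') *)
Lemma qhom_root_bound (q : qform) (x u v : R) :
  qa q <> 0%Z -> qeval q x = 0 -> Rabs (u - v * x) <= 1 -> Rabs v * Rabs (u - v * x) <= 3 ->
  Rabs (qhom q u v) <= qbound q x.
Proof.
  destruct q as [A B C]. unfold qhom, qeval, qbound; cbn [qa qb qc].
  intros HA Hq He Hve. assert (HA' : IZR A <> 0) by (apply not_0_IZR; exact HA).
  set (e := u - v * x) in *. set (dl := 2 * x + IZR B / IZR A).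
  replace (IZR A * u ^ 2 + IZR B * u * v + IZR C * v ^ 2) with (IZR A * (e * e + v * e * dl))
    by (replace (IZR C) with (- IZR A * x ^ 2 - IZR B * x) by lra; unfold e, dl; field; exact HA').
  rewrite Rabs_mult. apply Rmult_le_compat_l; [apply Rabs_pos|].
  eapply Rle_trans; [apply Rabs_triang|].
  rewrite !Rabs_mult.
  assert (0 <= Rabs e) by apply Rabs_pos. assert (0 <= Rabs dl) by apply Rabs_pos.
  nra.
Qed.

Lemma qpull_coef_bound (n : nat) (M : mat) (q : qform) (x t : R) :
  oocf_mat n M -> 0 <= t <= 1 -> x = mobius M t -> qa q <> 0%Z -> qeval q x = 0 ->
  Rabs (IZR (qc (qpull q M))) <= qbound q x /\
  (1 / 3 <= t -> Rabs (IZR (qa (qpull q M))) <= qbound q x).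
Proof.
  intros HM Ht Hx HA Hq.
  pose proof (oocf_mat_den_pos _ _ _ HM (proj1 Ht)) as Hw.
  destruct (mobius_column_deviation M t ltac:(lra)) as [E1 E2]. rewrite <- Hx in E1, E2.
  destruct HM as [_ _ Hc Hd _ Hdet _ _]. apply IZR_le in Hc, Hd.
  set (w := IZR (m21 M) * t + IZR (m22 M)) in *.
  assert (HD : Rabs (IZR (mat_det M)) = 1)
    by (destruct Hdet as [-> | ->]; unfold Rabs; destruct Rcase_abs; lra).
  assert (Hw1 : 1 <= w) by (unfold w; assert (0 <= IZR (m21 M) * t) by (apply Rmult_le_pos; lra); lra).
  rewrite qpull_qa, qpull_qc. split; [|intro Ht3]; apply (qhom_root_bound q x); auto.
  - rewrite E2. unfold Rdiv. rewrite !Rabs_mult, Rabs_Ropp, HD, Rabs_inv, !Rabs_pos_eq by lra.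
    apply Rle_div_l_iff; lra.
  - rewrite E2. unfold Rdiv. rewrite !Rabs_mult, Rabs_Ropp, HD, Rabs_inv, !Rabs_pos_eq by lra.
    replace (IZR (m22 M) * (1 * t * / w)) with (IZR (m22 M) * t / w) by (field; lra).
    apply Rle_div_l_iff; [lra|]. unfold w. nra.
  - rewrite E1. unfold Rdiv. rewrite Rabs_mult, HD, Rabs_inv, Rabs_pos_eq by lra.
    apply Rle_div_l_iff; lra.
  - rewrite E1. unfold Rdiv. rewrite !Rabs_mult, HD, Rabs_inv, !Rabs_pos_eq by lra.
    replace (IZR (m21 M) * (1 * / w)) with (IZR (m21 M) / w) by (field; lra).
    apply Rle_div_l_iff; [lra|]. unfold w. nra.
Qed.

Definition box_qforms (K : Z) : list qform :=
  flat_map (fun a => flat_map (fun b => map (QForm a b) (int_range K)) (int_range K)) (int_range K).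

Lemma in_box_qforms (K : Z) (q : qform) :
  (Z.abs (qa q) <= K)%Z -> (Z.abs (qb q) <= K)%Z -> (Z.abs (qc q) <= K)%Z -> In q (box_qforms K).
Proof.
  destruct q as [a b c]; cbn [qa qb qc]. intros Ha Hb Hc. unfold box_qforms.
  apply in_flat_map. exists a. split; [apply in_int_range, Ha|].
  apply in_flat_map. exists b. split; [apply in_int_range, Hb|].
  apply in_map, in_int_range, Hc.
Qed.

(** * Eventually periodic expansions *)

Lemma quadratic_irrational_of_periodic (x : R) (s : nat -> Z * Z) :
  irrational x -> is_oocf_expansion x s -> eventually_periodic s -> quadratic_irrational x.
Proof.
  intros Hi Hx [N [p [Hp Hper]]].
  pose proof (expansion_admissible x s Hx) as Had.
  pose proof (digit_prod_oocf s N p Had) as HP. pose proof (digit_prod_oocf s 0 N Had) as HQ.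
  set (z := orbit x N) in *.
  set (P := digit_prod s N p) in *. set (Q := digit_prod s 0 N) in *.
  assert (Hz0 : 0 <= z) by apply (expansion_orbit_range x s N Hx).
  assert (HwP := oocf_mat_den_pos _ _ _ HP Hz0). assert (HwQ := oocf_mat_den_pos _ _ _ HQ Hz0).
  assert (Hfix : mobius P z = z).
  { pose proof (orbit_mobius x s N p Hx) as E.
    rewrite <- (orbit_repeat_of_periodic x s N p Hx Hper) in E. symmetry; exact E. }
  assert (Hxz : x = mobius Q z) by exact (orbit_mobius x s 0 N Hx).
  assert (HdetQ : mat_det Q <> 0%Z) by (destruct (oocf_det _ _ HQ) as [-> | ->]; discriminate).
  apply (quadratic_irrational_of_root (qpull (qfix P) (mat_adj Q))).
  - exact Hi.
  - intro H0. apply qpull_eq_qzero in H0; [|rewrite mat_det_adj; exact HdetQ].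
    exact (qfix_neq_qzero p P HP Hp H0).
  - rewrite Hxz, qeval_qpull_adj_mobius, (qeval_qfix P z); [ring | lra | exact Hfix | lra].
Qed.

(* With x = p/q = M t for M = (a b; c d) the product of the first |q| digit matrices,
   P = p d - q b is odd and Q = q a - p c satisfies P = t Q with t >= 0, while
   c P + d Q = q det M; hence |q| >= c + d >= 2|q| + 1. *)
Lemma odd_fraction_no_expansion (x : R) (s : nat -> Z * Z) (p q : Z) :
  is_oocf_expansion x s -> x = IZR p / IZR q -> Z.odd p = true -> Z.odd q = true -> False.
Proof.
  intros Hx Hxpq Hp Hq.
  assert (Hq0 : q <> 0%Z) by (intros ->; discriminate).
  set (m := Z.to_nat (Z.abs q)).
  pose proof (digit_prod_oocf s 0 m (expansion_admissible x s Hx)) as HM.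
  pose proof (orbit_mobius x s 0 m Hx) as Hxt. simpl Nat.iter in Hxt.
  pose proof (expansion_orbit_range x s m Hx) as Ht.
  set (t := orbit x m) in *. set (M := digit_prod s 0 m) in *.
  pose proof (oocf_mat_den_pos _ _ _ HM (proj1 Ht)) as Hw.
  destruct HM as [_ _ Hc Hd Hs Hdet _ Hcol2].
  set (P := (p * m22 M - q * m12 M)%Z). set (Q := (q * m11 M - p * m21 M)%Z).
  assert (HPQ : IZR P = t * IZR Q).
  { assert (Hq' : IZR q <> 0) by (apply not_0_IZR; exact Hq0).
    assert (E : IZR p * (IZR (m21 M) * t + IZR (m22 M)) = IZR q * (IZR (m11 M) * t + IZR (m12 M))).
    { replace (IZR p) with (x * IZR q) by (rewrite Hxpq; field; exact Hq').
      rewrite Hxt. unfold mobius. field. lra. }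
    unfold P, Q. rewrite !minus_IZR, !mult_IZR. lra. }
  assert (HP : Z.odd P = true).
  { unfold P. rewrite Z.odd_sub, !Z.odd_mul, Hp, Hq, !Bool.andb_true_l.
    rewrite Z.odd_add in Hcol2. destruct (Z.odd (m12 M)), (Z.odd (m22 M)); auto. }
  assert (Hpair : (m21 M * P + m22 M * Q = q * mat_det M)%Z) by (unfold P, Q, mat_det; ring).
  assert (Hm : Z.of_nat m = Z.abs q) by (unfold m; rewrite Z2Nat.id; lia).
  assert (Hsign : (0 < P /\ 0 < Q \/ P < 0 /\ Q < 0)%Z).
  { destruct (Z.lt_trichotomy P 0) as [HP0 | [HP0 | HP0]].
    - right. split; [exact HP0|]. apply IZR_lt in HP0. apply lt_IZR. simpl in *. nra.
    - rewrite HP0 in HP. discriminate.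
    - left. split; [exact HP0|]. apply IZR_lt in HP0. apply lt_IZR. simpl in *. nra. }
  destruct Hsign as [[HP0 HQ0] | [HP0 HQ0]]; destruct Hdet as [Hdet | Hdet]; rewrite Hdet in Hpair;
    nia.
Qed.

Lemma reduced_fraction (x : R) (p q : Z) :
  q <> 0%Z -> x = IZR p / IZR q ->
  exists p' q' : Z, (0 < q')%Z /\ Z.gcd p' q' = 1%Z /\ x = IZR p' / IZR q'.
Proof.
  intros Hq Hx. set (g := Z.gcd p q).
  assert (Hg : (0 < g)%Z).
  { assert (g <> 0%Z) by (intro E; apply Z.gcd_eq_0 in E; lia).
    pose proof (Z.gcd_nonneg p q). lia. }
  assert (Ep : p = (g * (p / g))%Z)
    by (apply Znumtheory.Zdivide_Zdiv_eq; [exact Hg | apply Z.gcd_divide_l]).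
  assert (Eq : q = (g * (q / g))%Z)
    by (apply Znumtheory.Zdivide_Zdiv_eq; [exact Hg | apply Z.gcd_divide_r]).
  assert (Hgcd : Z.gcd (p / g) (q / g) = 1%Z) by (apply Z.gcd_div_gcd; lia).
  assert (Hq0 : (q / g <> 0)%Z) by (intro E; rewrite E in Eq; lia).
  assert (Hx' : x = IZR (p / g) / IZR (q / g)).
  { rewrite Hx, Ep, Eq at 1. rewrite !mult_IZR. field. split; apply not_0_IZR; lia. }
  destruct (Z_lt_le_dec 0 (q / g)) as [Hpos | Hneg].
  - exists (p / g)%Z, (q / g)%Z. auto.
  - exists (- (p / g))%Z, (- (q / g))%Z. split; [lia|]. split.
    + rewrite Z.gcd_opp_l, Z.gcd_opp_r. exact Hgcd.
    + rewrite Hx', !opp_IZR. field. apply not_0_IZR. exact Hq0.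
Qed.

Lemma inf_rational_of_expansion (x : R) (s : nat -> Z * Z) :
  is_oocf_expansion x s -> ~ irrational x -> inf_rational x.
Proof.
  intros Hx Hrat.
  assert (H : exists p q, q <> 0%Z /\ x = IZR p / IZR q).
  { apply NNPP. intro H. apply Hrat. intros p q Hq E. apply H. eauto. }
  destruct H as [p0 [q0 [Hq0 E0]]].
  destruct (reduced_fraction x p0 q0 Hq0 E0) as [p [q [Hq [Hg E]]]].
  exists p, q. split; [exact Hq|]. split; [exact Hg|]. split; [|exact E].
  intro Hpar. destruct (Z.odd q) eqn:Oq.
  - apply (odd_fraction_no_expansion x s p q Hx E); congruence.
  - assert (Ep : Z.even p = true) by (rewrite <- Z.negb_odd, Hpar; reflexivity).
    assert (Eq : Z.even q = true) by (rewrite <- Z.negb_odd, Oq; reflexivity).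
    apply Z.even_spec in Ep, Eq. destruct Ep as [u ->], Eq as [v ->].
    rewrite Z.gcd_mul_mono_l in Hg. pose proof (Z.gcd_nonneg u v). lia.
Qed.

Lemma periodic_expansion_classification (x : R) (s : nat -> Z * Z) :
  is_oocf_expansion x s -> eventually_periodic s -> inf_rational x \/ quadratic_irrational x.
Proof.
  intros Hx Hper. destruct (classic (irrational x)) as [Hi | Hi].
  - right. exact (quadratic_irrational_of_periodic x s Hi Hx Hper).
  - left. exact (inf_rational_of_expansion x s Hx Hi).
Qed.

(** * Expansions of quadratic irrationals *)

(* At times n with T^n x >= 1/3 the pulled-back forms have the discriminant of q and
   bounded outer coefficients, so T^n x is a root of one of finitely many forms. *)
Lemma orbit_values_finite (x : R) (s : nat -> Z * Z) :
  quadratic_irrational x -> is_oocf_expansion x s ->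
  exists l : list R, forall n, 1 / 3 <= orbit x n -> In (orbit x n) l.
Proof.
  intros [Hi [A [B [C [HA Hq]]]]] Hx.
  set (q := QForm A B C). change (qeval q x = 0) in Hq. change (qa q <> 0%Z) in HA.
  set (K := up (qbound q x)).
  exists (flat_map qroots (box_qforms (K + (Z.abs (qdisc q) + 4 * K * K)))).
  intros n Hn.
  pose proof (digit_prod_oocf s 0 n (expansion_admissible x s Hx)) as HM.
  pose proof (orbit_mobius x s 0 n Hx) as Hxt. simpl Nat.iter in Hxt.
  pose proof (expansion_orbit_range x s n Hx) as Ht.
  set (M := digit_prod s 0 n) in *. set (t := orbit x n) in *.
  destruct (qpull_coef_bound n M q x t HM ltac:(lra) Hxt HA Hq) as [Hc Ha].
  apply Zabs_le_up in Hc. specialize (Ha Hn). apply Zabs_le_up in Ha. fold K in Ha, Hc.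
  set (qn := qpull q M) in *.
  assert (Hdisc : qdisc qn = qdisc q).
  { unfold qn. rewrite qdisc_qpull. destruct (oocf_det _ _ HM) as [-> | ->]; ring. }
  assert (Hb : (Z.abs (qb qn) <= Z.abs (qdisc q) + 4 * K * K)%Z).
  { unfold qdisc in *.
    assert (Z.abs (qa qn * qc qn) <= K * K)%Z by (rewrite Z.abs_mul; nia).
    assert (Z.abs (qb qn) <= qb qn * qb qn)%Z
      by (destruct (Z.abs_spec (qb qn)) as [[_ ->] | [_ ->]]; nia).
    lia. }
  assert (Hroot : qeval qn t = 0).
  { pose proof (oocf_mat_den_pos _ _ _ HM (proj1 Ht)).
    unfold qn. rewrite qeval_qpull, <- Hxt, Hq; [ring | lra]. }
  assert (Hqn : qa qn <> 0%Z).
  { apply (qa_neq0_of_irrational_root qn t); [exact (orbit_irrational x s n Hi Hx) | | exact Hroot].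
    intro H0. apply qpull_eq_qzero in H0; [| destruct (oocf_det _ _ HM) as [-> | ->]; discriminate].
    apply HA. rewrite H0. reflexivity. }
  apply in_flat_map. exists qn. split.
  - apply in_box_qforms; lia.
  - apply qeval_root_in_qroots; assumption.
Qed.

Lemma periodic_of_quadratic_irrational (x : R) (s : nat -> Z * Z) :
  quadratic_irrational x -> is_oocf_expansion x s -> eventually_periodic s.
Proof.
  intros Hq Hx. pose proof (proj1 Hq) as Hi.
  destruct (orbit_values_finite x s Hq Hx) as [l Hl].
  destruct (increasing_enumeration _ (orbit_ge_third_infinitely_often x s Hi Hx)) as [g [Hg Hinc]].
  destruct (list_pigeonhole l (fun i => orbit x (g i)) (fun i => Hl _ (Hg i))) as [i [j [Hij Hrep]]].
  destruct (eventually_periodic_of_orbit_repeat oocf_T oocf_digit x (g i) (g j) (Hinc i j Hij) Hrep)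
    as [N [p [Hp Hper]]].
  assert (Hdigits : forall k, s k = oocf_digit (orbit x k))
    by (intro k; apply inB_irrational_digit; [apply (Hx k) | apply (orbit_irrational x s k Hi Hx)]).
  exists N, p. split; [exact Hp|]. intros k Hk. rewrite !Hdigits. apply Hper, Hk.
Qed.

Theorem theorem1p2 :
  (forall (x : R) (s : nat -> Z * Z),
      0 <= x <= 1 -> is_oocf_expansion x s -> eventually_periodic s ->
      inf_rational x \/ quadratic_irrational x)
  /\
  (forall x : R, 0 < x < 1 -> quadratic_irrational x ->
      (exists s : nat -> Z * Z, is_oocf_expansion x s) /\
      (forall s : nat -> Z * Z, is_oocf_expansion x s -> eventually_periodic s)).
Proof.
  split.
  - intros x s _ Hx Hper. exact (periodic_expansion_classification x s Hx Hper).
  - intros x Hx Hq. split.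
    + exact (oocf_expansion_exists x Hx (proj1 Hq)).
    + intros s Hs. exact (periodic_of_quadratic_irrational x s Hq Hs).
Qed.
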